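(* Let $G$ be a threshold graph with $n\ge3$ vertices and $\mathrm{seq}(G)=s_1s_2\cdots s_{n-1}$. Then $G$ is Hamiltonian if and only if $s_{n-1}=1$ and $h(s_1s_2\cdots s_{n-2})=0$.
   Context: A threshold graph on $n\ge1$ vertices is built from a base vertex $v_0$ by successively adding $v_1,\dots,v_{n-1}$, each either isolated (adjacent to no earlier vertex) or dominating (adjacent to all earlier vertices); its creation sequence $\mathrm{seq}(G)=s_1\cdots s_{n-1}$ has $s_i=1$ if $v_i$ is dominating and $s_i=0$ otherwise. For a binary string $s=s_1\cdots s_m$ and $0\le k\le m$, the $k$-th tail is $s_{m-k+1}\cdots s_m$ (empty for $k=0$); $z_k(s)$, $u_k(s)$ are the numbers of zeros and ones in it, and $h(s)=\max_{0\le k\le m}\{z_k(s)-u_k(s)\}$. *)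

From mathcomp Require Import all_boot all_order all_algebra.
Set Implicit Arguments. Unset Strict Implicit. Unset Printing Implicit Defensive.
Import Order.TTheory GRing.Theory Num.Theory.

(* Threshold graph with creation sequence s = s_1 ... s_{n-1} (s_i = nth false s (i-1)),
   on vertex set 'I_n (vertex i is v_i).  For i < j, v_i ~ v_j iff v_j was added as a
   dominating vertex, i.e. s_j = 1. *)

Definition threshold_adj (n : nat) (s : seq bool) : rel 'I_n :=
  fun i j => (i != j) && nth false s (maxn i j).-1.

Definition hamiltonian (n : nat) (e : rel 'I_n) : Prop :=
  exists p : seq 'I_n, [/\ uniq p, size p = n & cycle e p].

Definition tail_k (s : seq bool) (k : nat) : seq bool := drop (size s - k) s.
Definition zk (s : seq bool) (k : nat) : nat := count negb (tail_k s k).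
Definition uk (s : seq bool) (k : nat) : nat := count id (tail_k s k).

(* h(s) = max_{0 <= k <= |s|} (z_k(s) - u_k(s)), computed in int.  The neutral element 0
   of the max-fold is harmless since the k = 0 term is 0. *)
Definition hfun (s : seq bool) : int :=
  \big[Num.max/0%R]_(k < (size s).+1) ((zk s k)%:Z - (uk s k)%:Z)%R.
Arguments threshold_adj n s : clear implicits.

From mathcomp Require Import all_boot all_order all_algebra.
From mathcomp Require Import zify.
Import Order.TTheory GRing.Theory Num.Theory.
Set Implicit Arguments. Unset Strict Implicit.

(* Let c(m) be the least number of vertex-disjoint paths covering v_0, ..., v_m.
   Adding v_(m+1) as an isolated vertex raises c by one; adding it as a dominating
   vertex lowers c by one (it glues two paths) unless c = 1; conversely, deleting
   v_(m+1) from a cover changes its size by at most these amounts.  Hence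
   c(m) = 1 + h(s_1 ... s_m).  Since v_(n-1) is adjacent to every other vertex or
   to none, G is Hamiltonian iff s_(n-1) = 1 and c(n-2) = 1. *)

Lemma tail_k_rcons t x k : k <= size t -> tail_k (rcons t x) k.+1 = rcons (tail_k t k) x.
Proof. by move=> hk; rewrite /tail_k size_rcons subSS drop_rcons // leq_subr. Qed.

Lemma zk_rcons t x k : k <= size t -> zk (rcons t x) k.+1 = zk t k + ~~ x.
Proof. by move=> hk; rewrite /zk tail_k_rcons // -cats1 count_cat /= addn0. Qed.

Lemma uk_rcons t x k : k <= size t -> uk (rcons t x) k.+1 = uk t k + x.
Proof. by move=> hk; rewrite /uk tail_k_rcons // -cats1 count_cat /= addn0. Qed.

Lemma zk0 t : zk t 0 = 0.
Proof. by rewrite /zk /tail_k subn0 drop_size. Qed.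

Lemma uk0 t : uk t 0 = 0.
Proof. by rewrite /uk /tail_k subn0 drop_size. Qed.

Section ThresholdPathCovers.
Variable s : seq bool.

Definition thr_adj : rel nat := fun i j => (i != j) && nth false s (maxn i j).-1.

Definition is_path (q : seq nat) := if q is x :: r then path thr_adj x r else false.

Definition path_cover m (ps : seq (seq nat)) :=
  all is_path ps && perm_eq (flatten ps) (iota 0 m).

Lemma thr_adjC u v : thr_adj u v = thr_adj v u.
Proof. by rewrite /thr_adj eq_sym maxnC. Qed.

Lemma thr_adj_lt u v : u < v -> thr_adj u v = nth false s v.-1.
Proof. by move=> uv; rewrite /thr_adj (maxn_idPr (ltnW uv)) neq_ltn uv. Qed.

Lemma perm_iotaS m (r t : seq nat) :
  perm_eq t (m :: r) -> perm_eq t (iota 0 m.+1) = perm_eq r (iota 0 m).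
Proof.
have /permPr -> : perm_eq (iota 0 m.+1) (m :: iota 0 m).
  by rewrite -addn1 iotaD add0n perm_catC.
by move/permPl => ->; rewrite perm_cons.
Qed.

Lemma path_cover_lt m ps u : path_cover m ps -> u \in flatten ps -> u < m.
Proof. by case/andP=> _ /perm_mem ->; rewrite mem_iota. Qed.

Lemma path_cover_size_gt0 m ps : path_cover m.+1 ps -> 0 < size ps.
Proof. by case: ps => // /andP[_ /perm_size]; rewrite size_iota. Qed.

Definition nonnil_parts (a b : seq nat) : seq (seq nat) := [seq c <- [:: a; b] | c != [::]].

Lemma flatten_nonnil_parts a b : flatten (nonnil_parts a b) = a ++ b.
Proof. by case: a => [|x a]; case: b => [|y b] //=; rewrite ?cats0. Qed.

Lemma size_nonnil_parts a b : size (nonnil_parts a b) <= 2.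
Proof. by case: a; case: b. Qed.

Lemma is_path_nonnil_parts a v b : is_path (a ++ v :: b) -> all is_path (nonnil_parts a b).
Proof.
case: a => [|x a] /=; first by case: b => [|y b] //= /andP[_ ->].
rewrite cat_path => /andP[pa /= /andP[_ pb]].
by case: b pb => [|y b] //= => [_|/andP[_ ->]]; rewrite /= pa.
Qed.

Lemma is_path_nbr a v b : is_path (a ++ v :: b) -> a ++ b != [::] ->
  exists2 u, u \in a ++ b & thr_adj u v.
Proof.
case: a => [|x a] /=.
  case: b => [|y b] //= /andP[yv _] _.
  by exists y; rewrite ?inE ?eqxx // thr_adjC.
rewrite cat_path => /andP[_ /= /andP[xv _]] _.
by exists (last x a); rewrite // -cat_cons mem_cat mem_last.
Qed.

(* Removing the last vertex m+1 from its path splits that path into at most two;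
   if m+1 is isolated from the earlier vertices it must have been a path of its own. *)
Lemma path_cover_delete m ps : path_cover m.+2 ps ->
  exists ps', path_cover m.+1 ps' /\
              size ps' + ~~ nth false s m <= size ps + nth false s m.
Proof.
move=> cov; have /flattenP[q qps vq] : m.+1 \in flatten ps.
  by case/andP: (cov) => _ /perm_mem ->; rewrite mem_iota add0n leqnn.
case/splitPr: qps cov => ps1 ps2 cov; case/splitPr: vq cov => a b cov.
have ltv u : u \in a ++ b -> u < m.+2.
  move=> uab; apply: (path_cover_lt cov); apply/flattenP.
  exists (a ++ m.+1 :: b); first by rewrite mem_cat inE eqxx orbT.
  by move: uab; rewrite !mem_cat inE => /orP[] ->; rewrite ?orbT.
case/andP: (cov) => oks pe; move: oks; rewrite all_cat /= => /and3P[ok1 okq ok2].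
set ps' := ps1 ++ nonnil_parts a b ++ ps2.
have pe' : perm_eq (flatten (ps1 ++ (a ++ m.+1 :: b) :: ps2)) (m.+1 :: flatten ps').
  apply/permP => p; rewrite !flatten_cat /= flatten_nonnil_parts /= !count_cat /=.
  lia.
exists ps'; split.
  by rewrite /path_cover !all_cat ok1 ok2 (is_path_nonnil_parts okq) -(perm_iotaS pe') pe.
rewrite /ps' !size_cat /=; case sm: (nth false s m) => /=.
  by have := size_nonnil_parts a b; lia.
suff [-> ->] : a = [::] /\ b = [::] by rewrite /=; lia.
have [ab0|nab] := eqVneq (a ++ b) [::]; first by move: ab0; case: (a) (b) => [|? ?] [|? ?].
have [u uab Auv] := is_path_nbr okq nab.
have uv : u < m.+1.
  rewrite ltn_neqAle -ltnS ltv // andbT.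
  by apply: contraTneq Auv => ->; rewrite /thr_adj eqxx.
by move: Auv; rewrite thr_adj_lt // sm.
Qed.

(* A dominating vertex m+1 glues two paths together, or extends the only one;
   an isolated one starts a new path. *)
Lemma path_cover_extend m ps : path_cover m.+1 ps ->
  exists ps', path_cover m.+2 ps' /\
    (size ps' = 1 \/ size ps' + nth false s m <= size ps + ~~ nth false s m).
Proof.
move=> cov; case/andP: (cov) => okps _.
have adj_new u : u \in flatten ps -> thr_adj u m.+1 = nth false s m.
  by move/(path_cover_lt cov)/thr_adj_lt.
have cover_new ps' :
    all is_path ps' -> perm_eq (flatten ps') (m.+1 :: flatten ps) -> path_cover m.+2 ps'.
  by move=> ok' pe'; case/andP: cov => _ pe; rewrite /path_cover ok' (perm_iotaS pe').
case sm: (nth false s m); last first.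
  exists ([:: m.+1] :: ps); split; last by right; rewrite /=; lia.
  by apply: cover_new; rewrite //= okps.
case: ps cov okps adj_new cover_new => [|q1 [|q2 ps]] cov okps adj_new cover_new.
- by have := path_cover_size_gt0 cov.
- exists [:: rcons q1 m.+1]; split; [|by left].
  apply: cover_new; last by rewrite /= !cats0 perm_rcons.
  case: q1 okps adj_new {cov} => // y q1 /= /andP[pq _] adj_new.
  by rewrite andbT rcons_path pq adj_new ?sm // cats0 mem_last.
- exists ((q1 ++ m.+1 :: q2) :: ps); split; last by right; rewrite /=; lia.
  apply: cover_new; last by apply/permP => p; rewrite /= !count_cat /=; lia.
  case: q1 q2 okps adj_new {cov} => [|y q1] [|z q2] //=; rewrite ?andbF //.
  case/and3P=> pq1 pq2 ->; rewrite cat_path pq1 /= pq2 !andbT => adj_new.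
  rewrite [thr_adj m.+1 z]thr_adjC !adj_new ?sm //.
    by rewrite inE mem_cat inE eqxx !orbT.
  by rewrite -cat_cons mem_cat mem_last.
Qed.

Lemma path_cover_size_lb m ps k : m <= size s -> path_cover m.+1 ps -> k <= m ->
  zk (take m s) k + 1 <= size ps + uk (take m s) k.
Proof.
elim: m ps k => [|m IH] ps [|k] hm cov hk;
  rewrite ?zk0 ?uk0 ?addn0 ?add0n ?(path_cover_size_gt0 cov) //.
have [ps' [cov' hsize]] := path_cover_delete cov.
have := IH ps' k (ltnW hm) cov' hk.
rewrite (take_nth false hm) zk_rcons ?uk_rcons ?size_takel //; try exact: ltnW.
lia.
Qed.

Lemma path_cover_size_ub m : m <= size s ->
  exists ps, path_cover m.+1 ps /\
    exists2 k, k <= m & size ps + uk (take m s) k <= zk (take m s) k + 1.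
Proof.
elim: m => [|m IH] hm.
  by exists [:: [:: 0]]; split => //; exists 0; rewrite ?zk0 ?uk0.
have [ps [cov [k hk hK]]] := IH (ltnW hm).
have [ps' [cov' [one|hsize]]] := path_cover_extend cov; exists ps'; split => //.
  by exists 0; rewrite ?zk0 ?uk0 ?one.
exists k.+1 => //; rewrite (take_nth false hm) zk_rcons ?uk_rcons ?size_takel //; lia.
Qed.

Lemma single_path_coverP m : m <= size s ->
  (exists q, path_cover m.+1 [:: q]) <->
  (forall k, k <= m -> zk (take m s) k <= uk (take m s) k).
Proof.
move=> hm; split=> [[q cov] k hk | hz].
  by have := path_cover_size_lb hm cov hk; rewrite /=; lia.
have [ps [cov [k hk hK]]] := path_cover_size_ub hm.
have := hz k hk; have := path_cover_size_gt0 cov.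
case: ps cov hK => [|q [|q' ps]] cov hK //= _; first by exists q.
by move: hK => /=; lia.
Qed.

Lemma hamiltonian_iotaP n :
  hamiltonian (threshold_adj n s) <->
  exists2 c, perm_eq c (iota 0 n) & cycle thr_adj c.
Proof.
have adjE : threshold_adj n s =2 relpre val thr_adj.
  by move=> i j; rewrite /= /thr_adj val_eqE.
split=> [[p [up sp cp]] | [c pc cc]].
  exists (map val p); last by rewrite cycle_map -(eq_cycle adjE).
  rewrite -val_enum_ord perm_map // uniq_perm ?enum_uniq //.
  by apply: (uniq_min_size up _ _).2 => [i _|]; rewrite ?mem_enum // size_enum_ord sp.
have valK : map val (pmap insub c : seq 'I_n) = c.
  rewrite (pmap_filter (insubK _)); apply/all_filterP/allP => x.
  by rewrite isSome_insub (perm_mem pc) mem_iota.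
exists (pmap insub c); split.
- by rewrite -(map_inj_uniq val_inj) valK (perm_uniq pc) iota_uniq.
- by rewrite -(size_map val) valK (perm_size pc) size_iota.
- by rewrite (eq_cycle adjE) -cycle_map valK.
Qed.

Lemma cycle_iotaP m :
  (exists2 c, perm_eq c (iota 0 m.+2) & cycle thr_adj c) <->
  nth false s m /\ exists q, path_cover m.+1 [:: q].
Proof.
split=> [[c pc cc] | [sm [[|y w] cov]]].
- have cm : m.+1 \in c by rewrite (perm_mem pc) mem_iota add0n ltnSn.
  case/rot_to: cm => i r ec.
  have pr : perm_eq r (iota 0 m.+1).
    by rewrite -(perm_iotaS (perm_refl (m.+1 :: r))) -ec perm_rot.
  move: cc; rewrite -(rot_cycle i) ec.
  case: r pr {ec} => [|y w] pr; first by have := perm_size pr; rewrite size_iota.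
  have ly : y < m.+1 by have := mem_head y w; rewrite (perm_mem pr) mem_iota.
  rewrite /= rcons_path => /and3P[adj_y pw _]; split.
    by move: adj_y; rewrite thr_adjC thr_adj_lt.
  by exists (y :: w); rewrite /path_cover /= pw cats0.
- by case/andP: cov.
- have lt_m u : u \in y :: w -> u < m.+1.
    by move=> uw; apply: (path_cover_lt cov); rewrite /= cats0.
  case/andP: cov => /andP[pw _] pe.
  exists (m.+1 :: y :: w).
    by rewrite (perm_iotaS (perm_refl (m.+1 :: y :: w))) -[y :: w]cats0.
  rewrite /= rcons_path; rewrite /= in pw.
  by rewrite pw thr_adjC !thr_adj_lt ?lt_m ?mem_head ?mem_last //= sm.
Qed.

End ThresholdPathCovers.

Lemma hfun_eq0P t : hfun t = 0%R <-> (forall k, k <= size t -> zk t k <= uk t k).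
Proof.
set F := fun k : 'I_(size t).+1 => ((zk t k)%:Z - (uk t k)%:Z)%R.
have F_le0 k : (F k <= 0)%R = (zk t k <= uk t k) by rewrite subr_le0 lez_nat.
have F0 : F ord0 = 0%R by rewrite /F /= zk0 uk0.
split=> [h0 k hk | hle].
  by rewrite -(F_le0 (Ordinal (hk : k < (size t).+1))) -h0 le_bigmax.
apply/eqP; rewrite eq_le; apply/andP; split; last by rewrite -F0 le_bigmax.
by apply/bigmax_leP; split=> // i _; rewrite F_le0 hle // -ltnS.
Qed.

Theorem mainTheorem8 (n : nat) (s : seq bool) :
  3 <= n -> size s = n.-1 ->
  (hamiltonian (threshold_adj n s) <->
   nth false s (n - 2) = true /\ hfun (take (n - 2) s) = 0%R).
Proof.
move=> n3 szs; have [m en] : exists m, n = m.+2 by exists n.-2; lia.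
subst n; rewrite subn2 /=; have hm : m <= size s by rewrite szs.
have szt : size (take m s) = m by rewrite size_takel.
apply: iff_trans (hamiltonian_iotaP _ _) _; apply: iff_trans (cycle_iotaP _ _) _.
split=> -[sm cov]; split=> //.
  by apply/hfun_eq0P; rewrite szt; apply/single_path_coverP.
by apply/single_path_coverP => //; move/hfun_eq0P: cov; rewrite szt.
Qed.
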